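(* Let $X$, $Z$ be topological vector spaces, $C\subseteq Z$ a nonempty closed convex cone with $C^-\neq\{0\}$, $f:X\to\mathcal{F}(Z,C)$ convex and $x_0\in{\rm dom\,} f$. If $f$ is lattice-bounded above on a neighborhood of $x_0$, or efficient at $x_0$, or upper lattice-semicontinuous at $x_0$, or lower continuous at $x_0$, then $f$ has the corresponding property (lattice-bounded above on a neighborhood of $x$, efficient at $x$, upper lattice-semicontinuous at $x$, lower continuous at $x$, respectively) at every $x\in\operatorname{Int}({\rm dom\,} f)$.
   Context: $\mathcal{F}(Z,C)=\{A\subseteq Z\colon A=\operatorname{cl}(A+C)\}$ (empty set included); $C^-=\{z^*\in Z^*\colon z^*(z)\le0\ \forall z\in C\}$; ${\rm dom\,} f=\{x\colon f(x)\neq\emptyset\}$. $f$ is convex iff $tf(x_1)+(1-t)f(x_2)\subseteq f(tx_1+(1-t)x_2)$ for all $x_1,x_2$, $t\in(0,1)$. Lattice-bounded above on $M$: there is $a\in Z$ with $a\in f(x)$ for all $x\in M$. Efficient at $x_0$: there exist a neighborhood $U$ of $x_0$ and a bounded set $B\subseteq Z$ (absorbed by every neighborhood of $0$) with $f(x)\cap B\neq\emptyset$ for all $x\in U$. Upper lattice-semicontinuous at $x_0$: $f(x_0)\subseteq\operatorname{cl}\bigcup_{U\in\mathcal{N}(x_0)}\bigcap_{x\in U}f(x)$, $\mathcal{N}(x_0)$ the neighborhoods of $x_0$. Lower continuous at $x_0$: for every $z_0\in f(x_0)$ and every neighborhood $V$ of $z_0$ there is a neighborhood $U$ of $x_0$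 with $f(x)\cap V\neq\emptyset$ for all $x\in U$. *)

From HB Require Import structures.
From mathcomp Require Import all_boot all_order all_algebra.
From mathcomp Require Import all_classical all_reals all_analysis.
Set Implicit Arguments.
Unset Strict Implicit.
Unset Printing Implicit Defensive.
Import Order.TTheory GRing.Theory Num.Theory.
Import numFieldTopology.Exports.
Local Open Scope classical_set_scope.
Local Open Scope ring_scope.

Section SetValued.
Variable R : realType.

Definition set_add (V : lmodType R) (A B : set V) : set V :=
  [set a + b | a in A & b in B].
Definition set_scale (V : lmodType R) (t : R) (A : set V) : set V :=
  [set t *: a | a in A].

Variable Z : topologicalLmodType R.

Definition closed_convex_cone (C : set Z) : Prop :=
  C !=set0 /\ closed C /\
  (forall (s t : R) (x y : Z), C x -> C y -> 0 <= s -> 0 <= t ->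
     C (s *: x + t *: y)).

Definition dual_elt (zs : Z -> R) : Prop :=
  (forall (a : R) (x y : Z), zs (a *: x + y) = a * zs x + zs y) /\
  continuous zs.

Definition neg_dual_cone (C : set Z) : set (Z -> R) :=
  [set zs | dual_elt zs /\ forall z, C z -> zs z <= 0].

Definition in_FZC (C : set Z) (A : set Z) : Prop :=
  A = closure (set_add A C).

Definition tvs_bounded (B : set Z) : Prop :=
  forall V : set Z, nbhs (0 : Z) V ->
    exists s : R, 0 < s /\ forall t : R, s < t -> B `<=` set_scale t V.

Variable X : topologicalLmodType R.

Definition sv_dom (f : X -> set Z) : set X := [set x | f x !=set0].

Definition sv_convex (f : X -> set Z) : Prop :=
  forall (x1 x2 : X) (t : R), 0 < t < 1 ->
    set_add (set_scale t (f x1)) (set_scale (1 - t) (f x2))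
      `<=` f (t *: x1 + (1 - t) *: x2).

Definition lattice_bounded_above_on (f : X -> set Z) (M : set X) : Prop :=
  exists a : Z, forall x, M x -> f x a.

Definition lattice_bounded_above_near (f : X -> set Z) (x0 : X) : Prop :=
  exists U : set X, nbhs x0 U /\ lattice_bounded_above_on f U.

Definition efficient_at (f : X -> set Z) (x0 : X) : Prop :=
  exists U : set X, nbhs x0 U /\
  exists B : set Z, tvs_bounded B /\ forall x, U x -> f x `&` B !=set0.

Definition upper_lattice_sc_at (f : X -> set Z) (x0 : X) : Prop :=
  f x0 `<=` closure (\bigcup_(U in [set U | nbhs x0 U])
                       \bigcap_(x in U) f x).

Definition lower_continuous_at (f : X -> set Z) (x0 : X) : Prop :=
  forall z0, f x0 z0 -> forall V : set Z, nbhs z0 V ->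
    exists U : set X, nbhs x0 U /\ forall x, U x -> f x `&` V !=set0.

End SetValued.

From HB Require Import structures.
From mathcomp Require Import all_boot all_order all_algebra.
From mathcomp Require Import all_classical all_reals all_analysis.
From mathcomp Require Import lra ring.
Set Implicit Arguments.
Unset Strict Implicit.
Unset Printing Implicit Defensive.
Import Order.TTheory GRing.Theory Num.Theory.
Import numFieldTopology.Exports.
Local Open Scope classical_set_scope.
Local Open Scope ring_scope.

(* A point x interior to dom f lies on an
   open segment x = t x0 + (1 - t) x1 with x1 in dom f.  Fix b in f x1, z in
   f x and l in (0,1).  The homothety u |-> l t u + l (1 - t) x1 + (1 - l) x
   maps neighborhoods of x0 onto neighborhoods of x, and by convexity
   l (t a + (1 - t) b) + (1 - l) z lies in f at the image of u whenever a lies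
   in f u.  Upper bounds and bounded sets are preserved by this affine map of
   positive ratio l t; for the two semicontinuities l is chosen so small that
   the transported points stay in a prescribed neighborhood of z. *)

Section TopologicalLmodule.
Variables (R : realType) (E : topologicalLmodType R).

Lemma lmod_cvgD (T : Type) (F : set_system T) (FF : Filter F) (g h : T -> E) a b :
  g @ F --> a -> h @ F --> b -> (fun y => g y + h y) @ F --> a + b.
Proof.
move=> ga hb.
exact: (@continuous2_cvg _ _ _ _ F FF g h (fun u v : E => u + v) a b
  (@add_continuous _ (a, b)) ga hb).
Qed.

Lemma lmod_cvgZ (T : Type) (F : set_system T) (FF : Filter F)
    (s : T -> R) (g : T -> E) (k : R) (a : E) :
  s @ F --> k -> g @ F --> a -> (fun y => s y *: g y) @ F --> k *: a.
Proof.
move=> sk ga.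
exact: (@continuous2_cvg _ R^o _ _ F FF s g (fun (r : R^o) (v : E) => r *: v)
  k a (@scale_continuous _ _ ((k : R^o), a)) sk ga).
Qed.

Lemma nbhs0_unit_interval (A : set R) : nbhs 0 A -> exists l, 0 < l < 1 /\ A l.
Proof.
move=> /nbhs_ballP [e /= e0 He]; exists (Num.min (e / 2) (1 / 2)); split.
  by rewrite lt_min gt_min; apply/andP; split; [apply/andP; split|]; lra.
apply: He; rewrite /ball /= sub0r normrN ger0_norm; last first.
  by rewrite le_min; apply/andP; split; lra.
by rewrite gt_min; apply/orP; left; lra.
Qed.

Lemma nbhs_affine (k : R) (c y : E) (U : set E) : k != 0 -> nbhs y U ->
  nbhs (k *: y + c) [set w | exists2 u, U u & w = k *: u + c].
Proof.
move=> k0 Uy.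
have : (fun w => k^-1 *: (w - c)) @ (k *: y + c) --> k^-1 *: (k *: y + c - c).
  apply: lmod_cvgZ; first exact: cvg_cst.
  by apply: lmod_cvgD; [exact: cvg_id | exact: cvg_cst].
rewrite addrK scalerA mulVf // scale1r => inv_cvg.
have := inv_cvg U Uy; rewrite nbhs_simpl /=.
apply: filterS => w Uw; exists (k^-1 *: (w - c)) => //.
by rewrite scalerA mulfV // scale1r subrK.
Qed.

Lemma nbhs_segment_extension (D : set E) (y x : E) : nbhs x D ->
  exists y1 t, [/\ 0 < t < 1, D y1 & x = t *: y + (1 - t) *: y1].
Proof.
move=> Dx.
have : (fun s : R => x + s *: (x - y)) @ (0 : R) --> x + 0 *: (x - y).
  apply: lmod_cvgD; first exact: cvg_cst.
  by apply: lmod_cvgZ; [exact: cvg_id | exact: cvg_cst].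
rewrite scale0r addr0 => ray_cvg.
have [s [/andP [s0 s1] Ds]] := nbhs0_unit_interval (ray_cvg D Dx).
exists (x + s *: (x - y)), (s / (1 + s)); split => //.
  by rewrite divr_gt0 ?addr_gt0 //= ltr_pdivrMr ?addr_gt0 // mul1r ltrDr.
have e1 : (1 - s / (1 + s)) * s = s / (1 + s) by field; lra.
have e2 : 1 - s / (1 + s) + s / (1 + s) = 1 by ring.
set t := s / (1 + s) in e1 e2 *.
apply/esym; rewrite scalerDr !scalerBr !scalerA e1.
by rewrite addrCA (addrC (t *: x)) addNKr -scalerDl e2 scale1r.
Qed.

Lemma cvg_segment_endpoint (t : R) (b z y : E) :
  (fun q : R * E => q.1 *: (t *: q.2 + (1 - t) *: b) + (1 - q.1) *: z)
    @ ((0 : R), y) --> z.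
Proof.
have : (fun q : R * E => q.1 *: (t *: q.2 + (1 - t) *: b) + (1 - q.1) *: z)
    @ ((0 : R), y) --> 0 *: (t *: y + (1 - t) *: b) + (1 - 0) *: z.
  apply: lmod_cvgD; apply: lmod_cvgZ.
  - exact: cvg_fst.
  - apply: lmod_cvgD; last exact: cvg_cst.
    by apply: lmod_cvgZ; [exact: cvg_cst | exact: cvg_snd].
  - by apply: cvgB; [exact: cvg_cst | exact: cvg_fst].
  - exact: cvg_cst.
by rewrite scale0r add0r subr0 scale1r.
Qed.

Lemma tvs_bounded_affine (k : R) (c : E) (B : set E) : 0 < k -> tvs_bounded B ->
  tvs_bounded [set k *: a + c | a in B].
Proof.
move=> k0 bB V V0.
have := @add_continuous E ((0 : E), (0 : E)) V; rewrite /= addr0 => /(_ V0).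
move=> [[W1 W2] /= [W10 W20] W12V].
have [s1 [s10 B_W1]] := bB W1 W10.
have : (fun r : R => r *: c) @ (0 : R) --> 0 *: c.
  by apply: lmod_cvgZ; [exact: cvg_id | exact: cvg_cst].
rewrite scale0r => c_cvg.
have /nbhs_ballP [e /= e0 W2c] := c_cvg W2 W20.
(* For r > k s1 + e^-1, k a + c = r (w1 + r^-1 c) with w1 in W1 and
   r^-1 c in W2. *)
exists (k * s1 + e^-1); split; first by rewrite addr_gt0 ?mulr_gt0 ?invr_gt0.
move=> r r_big _ [a Ba <-].
have r0 : 0 < r by apply: lt_trans r_big; rewrite addr_gt0 ?mulr_gt0 ?invr_gt0.
have s1_lt : s1 < r / k.
  rewrite ltr_pdivlMr // mulrC; apply: le_lt_trans r_big.
  by rewrite lerDl invr_ge0 ltW.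
have [w1 W1w1 <-] := B_W1 _ s1_lt a Ba.
have W2rc : W2 (r^-1 *: c).
  apply: W2c; rewrite /ball /= sub0r normrN ger0_norm ?invr_ge0 ?ltW //.
  rewrite -(invrK e) ltf_pV2 ?posrE ?invr_gt0 //.
  by apply: le_lt_trans r_big; rewrite lerDr mulr_ge0 ?ltW.
exists (w1 + r^-1 *: c); first exact: (W12V (w1, r^-1 *: c)).
rewrite scalerDr !scalerA mulfV ?gt_eqF // scale1r.
by rewrite mulrCA mulfV ?gt_eqF // mulr1.
Qed.

End TopologicalLmodule.

Section ConvexSetValued.
Variables (R : realType) (X Z : topologicalLmodType R) (f : X -> set Z) (x0 : X).
Hypothesis fconv : sv_convex f.

Lemma sv_convex_comb (u1 u2 : X) (a1 a2 : Z) (t : R) :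
  0 < t < 1 -> f u1 a1 -> f u2 a2 ->
  f (t *: u1 + (1 - t) *: u2) (t *: a1 + (1 - t) *: a2).
Proof.
move=> t01 fa1 fa2; apply: fconv => //.
by exists (t *: a1); [exists a1 | exists ((1 - t) *: a2); first exists a2].
Qed.

Lemma interior_dom_split (x : X) : (sv_dom f)° x ->
  exists x1 t b, [/\ 0 < t < 1, f x1 b & x = t *: x0 + (1 - t) *: x1].
Proof.
move=> /(nbhs_segment_extension x0) [x1 [t [t01 [b fb] ->]]].
by exists x1, t, b.
Qed.

Lemma sv_convex_transfer (x x1 : X) (t l : R) (b z : Z) (U : set X) :
  0 < t < 1 -> 0 < l < 1 -> f x1 b -> f x z -> x = t *: x0 + (1 - t) *: x1 ->
  nbhs x0 U ->
  exists U', nbhs x U' /\ forall w, U' w -> exists2 u, U u &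
    forall a, f u a -> f w (l *: (t *: a + (1 - t) *: b) + (1 - l) *: z).
Proof.
move=> /andP [t0 t1] l01 fb fz ex Ux0.
set c := l *: ((1 - t) *: x1) + (1 - l) *: x.
have lt0 : l * t != 0 by case/andP: l01 => l0 _; rewrite gt_eqF ?mulr_gt0.
have homothety u : (l * t) *: u + c = l *: (t *: u + (1 - t) *: x1) + (1 - l) *: x.
  by rewrite /c scalerDr scalerA addrA.
have Ux := nbhs_affine c lt0 Ux0.
rewrite homothety -ex -scalerDl subrKC scale1r in Ux.
exists [set w | exists2 u, U u & w = (l * t) *: u + c]; split => //.
move=> _ [u Uu ->]; exists u => // a fa.
rewrite homothety; apply: sv_convex_comb => //.
by apply: sv_convex_comb => //; apply/andP.
Qed.

Lemma sv_convex_transfer_affine (x : X) (U : set X) :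
  nbhs x0 U -> (sv_dom f)° x ->
  exists k c, 0 < k /\ exists2 U', nbhs x U' &
    forall w, U' w -> exists2 u, U u & forall a, f u a -> f w (k *: a + c).
Proof.
move=> Ux0 /[dup] /nbhs_singleton [z fz] /interior_dom_split [x1 [t [b [t01 fb ex]]]].
have half01 : 0 < (2^-1 : R) < 1 by apply/andP; split; lra.
have [U' [Ux HU']] := sv_convex_transfer t01 half01 fb fz ex Ux0.
exists (2^-1 * t), (2^-1 *: ((1 - t) *: b) + (1 - 2^-1) *: z); split.
  by case/andP: t01 => t0 _; rewrite mulr_gt0 ?invr_gt0.
exists U' => // w /HU' [u Uu Hu]; exists u => // a /Hu.
by rewrite scalerDr scalerA addrA.
Qed.

Lemma sv_convex_transfer_near (x : X) (z z0 : Z) (V : set Z) :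
  (sv_dom f)° x -> f x z -> nbhs z V ->
  exists2 W, nbhs z0 W & exists2 g : Z -> Z, (forall a, W a -> V (g a)) &
    forall U, nbhs x0 U -> exists U', nbhs x U' /\
      forall w, U' w -> exists2 u, U u & forall a, f u a -> f w (g a).
Proof.
move=> /interior_dom_split [x1 [t [b [t01 fb ex]]]] fz Vz.
have [[A W] /= [A0 W0] AW_V] := @cvg_segment_endpoint _ _ t b z z0 _ Vz.
have [l [l01 Al]] := nbhs0_unit_interval A0.
exists W => //; exists (fun a => l *: (t *: a + (1 - t) *: b) + (1 - l) *: z).
  by move=> a Wa; exact: (AW_V (l, a)).
by move=> U; exact: sv_convex_transfer t01 l01 fb fz ex.
Qed.

Lemma lattice_bounded_above_near_interior (x : X) :
  lattice_bounded_above_near f x0 -> (sv_dom f)° x ->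
  lattice_bounded_above_near f x.
Proof.
move=> [U [Ux0 [a Ua]]] /(sv_convex_transfer_affine Ux0) [k [c [_ [U' Ux HU']]]].
exists U'; split => //; exists (k *: a + c) => w /HU' [u Uu]; apply; exact: Ua.
Qed.

Lemma efficient_at_interior (x : X) :
  efficient_at f x0 -> (sv_dom f)° x -> efficient_at f x.
Proof.
move=> [U [Ux0 [B [bB UB]]]] /(sv_convex_transfer_affine Ux0) [k [c [k0 [U' Ux HU']]]].
exists U'; split => //; exists [set k *: a + c | a in B].
split; first exact: tvs_bounded_affine.
move=> w /HU' [u /UB [a [fa Ba]] Hu].
by exists (k *: a + c); split; [exact: Hu | exists a].
Qed.

Lemma upper_lattice_sc_interior (x : X) : sv_dom f x0 ->
  upper_lattice_sc_at f x0 -> (sv_dom f)° x -> upper_lattice_sc_at f x.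
Proof.
move=> [z0 fz0] usc_x0 x_int z fz V Vz.
have [W Wz0 [g WV Ug]] := sv_convex_transfer_near z0 x_int fz Vz.
have [a [[U Ux0 Ua] Wa]] := usc_x0 z0 fz0 W Wz0.
have [U' [Ux HU']] := Ug U Ux0.
exists (g a); split; last exact: WV.
by exists U' => // w /HU' [u Uu]; apply; exact: Ua.
Qed.

Lemma lower_continuous_interior (x : X) : sv_dom f x0 ->
  lower_continuous_at f x0 -> (sv_dom f)° x -> lower_continuous_at f x.
Proof.
move=> [z0 fz0] lc_x0 x_int z fz V Vz.
have [W Wz0 [g WV Ug]] := sv_convex_transfer_near z0 x_int fz Vz.
have [U [Ux0 UW]] := lc_x0 z0 fz0 W Wz0.
have [U' [Ux HU']] := Ug U Ux0.
exists U'; split => // w /HU' [u /UW [a [fa Wa]] Hu].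
by exists (g a); split; [exact: Hu | exact: WV].
Qed.

End ConvexSetValued.

Theorem mainTheorem12 (R : realType) (X Z : topologicalLmodType R)
  (C : set Z) (f : X -> set Z) (x0 : X) :
  closed_convex_cone C ->
  (exists zs, neg_dual_cone C zs /\ zs <> (fun _ => 0)) ->
  (forall x, in_FZC C (f x)) ->
  sv_convex f ->
  sv_dom f x0 ->
  [/\ (lattice_bounded_above_near f x0 ->
         forall x, (sv_dom f)° x -> lattice_bounded_above_near f x),
      (efficient_at f x0 ->
         forall x, (sv_dom f)° x -> efficient_at f x),
      (upper_lattice_sc_at f x0 ->
         forall x, (sv_dom f)° x -> upper_lattice_sc_at f x) &
      (lower_continuous_at f x0 ->
         forall x, (sv_dom f)° x -> lower_continuous_at f x)].
Proof.
move=> _ _ _ fconv x0_dom; split=> hx0 x.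
- exact: (lattice_bounded_above_near_interior fconv hx0).
- exact: (efficient_at_interior fconv hx0).
- exact: (upper_lattice_sc_interior fconv x0_dom hx0).
- exact: (lower_continuous_interior fconv x0_dom hx0).
Qed.
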